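(* Let $k\geq 1$ and let $T$ be a $2k$-strong tournament such that for every two distinct vertices $x,y$ of $T$ there is a path of length 2 between $x$ and $y$ (i.e. a vertex $z$ with $x\to z\to y$ or $y\to z\to x$). Then $T$ is $(k+2)^{*}$-weakly connected.
   Context: A tournament is a digraph in which each pair of distinct vertices is joined by exactly one arc; $a\to b$ means $a$ dominates $b$ (i.e. $ab$ is an arc). A digraph is $m$-strong if it has more than $m$ vertices and remains strongly connected after deleting any set of fewer than $m$ vertices. For distinct vertices $u,v$ of a digraph $D$, a weak $k^{*}$-container between $u$ and $v$ is a set of $k$ internally disjoint paths, each of which is either a $(u,v)$-path or a $(v,u)$-path (different paths may have different directions), whose union contains every vertex of $D$. $D$ is $k^{*}$-weakly connected if there is a weak $k^{*}$-container between every two distinct vertices of $D$. *)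

(* A digraph on a finite vertex type V is given by its arc
   relation arc : rel V ("arc a b" means a dominates b). *)
From mathcomp Require Import all_boot.
Set Implicit Arguments. Unset Strict Implicit. Unset Printing Implicit Defensive.

Section Digraphs.
Variables (V : finType) (arc : rel V).

Definition tournament : Prop :=
  (forall x, ~~ arc x x) /\
  (forall x y, x != y -> (arc x y || arc y x) /\ ~~ (arc x y && arc y x)).

Definition strong_avoiding (S : {set V}) : Prop :=
  forall x y, x \notin S -> y \notin S ->
    connect [rel a b | [&& arc a b, a \notin S & b \notin S]] x y.

Definition m_strong (m : nat) : Prop :=
  m < #|V| /\ forall S : {set V}, #|S| < m -> strong_avoiding S.

Definition is_dipath (a b : V) (p : seq V) : bool :=
  if p is x :: q then [&& x == a, path arc x q, uniq p & last x q == b]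
  else false.

Definition weak_container (k : nat) (u v : V) : Prop :=
  exists P : 'I_k -> seq V,
    [/\ forall i, is_dipath u v (P i) || is_dipath v u (P i),
        forall i j, i != j -> P i != P j,
        forall i j, i != j -> forall x, x \in P i -> x \in P j -> x = u \/ x = v
      & forall x : V, exists i, x \in P i].

Definition weakly_connected_star (k : nat) : Prop :=
  forall u v : V, u != v -> weak_container k u v.

End Digraphs.

From mathcomp Require Import all_boot zify.
From Stdlib Require Import Classical_Prop.
Set Implicit Arguments. Unset Strict Implicit. Unset Printing Implicit Defensive.

(* Fix an arc u -> v.  Every other vertex w satisfies u -> w -> v, v -> w -> u,
   is dominated by both u and v ("below"), or dominates both ("above").
   First choose k+1 internally disjoint (u,v)- or (v,u)-paths with at most two
   interior vertices each.  Since the first one can be taken through a single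
   vertex (by the hypothesis on paths of length 2), fewer than 2k vertices are
   in use before each choice, so the rest of T is strongly connected; a path
   from v back to u in it must leave the set formed by v and the unused
   vertices below u and v, which produces either a middle vertex or an arc
   c -> d from below to above, i.e. a path u c d v.  With the arc uv this gives
   k+2 paths.  Then the uncovered vertices are absorbed one at a time: in a
   tournament, a vertex w with an in-neighbour on a path preceding one of its
   out-neighbours can be inserted into that path.  If no insertion applies, the
   uncovered vertices below u and v have no out-arcs leaving them and those
   above have no in-arcs entering them, which contradicts strong
   connectivity. *)


Section StrongClosure.
Variables (V : finType) (arc : rel V) (S : {set V}).
Hypothesis strongS : strong_avoiding arc S.

Lemma strong_avoiding_out_closed (Z : pred V) x y :
  (forall a b, arc a b -> a \notin S -> b \notin S -> Z a -> Z b) ->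
  x \notin S -> y \notin S -> Z x -> Z y.
Proof.
move=> closedZ xS yS; have /connectP [p pS ->] := strongS xS yS.
elim: p x pS {xS yS} => [|a p IH] x //= /andP [/and3P [xa xS aS] pS] Zx.
exact: IH pS (closedZ _ _ xa xS aS Zx).
Qed.

Lemma strong_avoiding_in_closed (Z : pred V) x y :
  (forall a b, arc a b -> a \notin S -> b \notin S -> Z b -> Z a) ->
  x \notin S -> y \notin S -> Z y -> Z x.
Proof.
move=> closedZ xS yS; apply: contraLR.
apply: (strong_avoiding_out_closed (Z := predC Z)) => // a b ab aS bS.
exact/contra/closedZ.
Qed.

End StrongClosure.

Lemma split_at_switch (T : Type) (p : pred T) x s :
  p x -> ~~ all p s ->
  exists t1 a b t2, [/\ x :: s = t1 ++ [:: a, b & t2], p a & ~~ p b].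
Proof.
elim: s x => [|y s IH] x //= px; case py: (p y) => /=.
- by case/(IH y py) => t1 [a [b [t2 [-> pa pb]]]]; exists (x :: t1), a, b, t2.
- by move=> _; exists [::], x, y, s; rewrite py.
Qed.

Section Dipaths.
Variables (V : finType) (arc : rel V).

Lemma dipath_head a b p : is_dipath arc a b p -> exists t, p = a :: t.
Proof. by case: p => [|x t] //= /and4P [/eqP -> _ _ _]; exists t. Qed.

Lemma dipath_last a b p x0 : is_dipath arc a b p -> last x0 p = b.
Proof. by case: p => [|x t] //= /and4P [_ _ _ /eqP]. Qed.

Lemma dipath_uniq a b p : is_dipath arc a b p -> uniq p.
Proof. by case: p => [|x t] //= /and4P []. Qed.

Lemma mem_dipath_head a b p : is_dipath arc a b p -> a \in p.
Proof. by case/dipath_head => t ->; apply: mem_head. Qed.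

Lemma mem_dipath_last a b p : is_dipath arc a b p -> b \in p.
Proof.
move=> pD; have [t pt] := dipath_head pD.
by rewrite -(dipath_last a pD) pt /= mem_last.
Qed.

Lemma dipath_splice a b t1 x y t2 r :
  is_dipath arc a b (t1 ++ [:: x, y & t2]) -> path arc x (rcons r y) -> uniq r ->
  ~~ has (mem (t1 ++ [:: x, y & t2])) r -> is_dipath arc a b (t1 ++ x :: r ++ y :: t2).
Proof.
move=> pD; rewrite rcons_path => /andP [xr ry] ur rp.
have uniq_spliced : uniq (t1 ++ x :: r ++ y :: t2).
  have -> : t1 ++ x :: r ++ y :: t2 = rcons t1 x ++ r ++ y :: t2 by rewrite -cats1 -catA.
  by rewrite uniq_catCA cat_uniq ur has_sym cat_rcons rp (dipath_uniq pD).
have path_spliced : path arc x (y :: t2) -> path arc x (r ++ y :: t2).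
  by rewrite cat_path /= xr ry => /andP [_ ->].
case: t1 pD uniq_spliced {rp} => [|c t1] /= /and4P [-> pD _ lb] -> /=.
  by rewrite path_spliced //= !last_cat.
move: pD lb; rewrite !cat_path /= !last_cat /= => /and3P [-> -> /path_spliced ->].
by rewrite last_cat.
Qed.

End Dipaths.

Lemma mem_flatten_nth (T : eqType) (L : seq (seq T)) j x :
  x \in nth [::] L j -> x \in flatten L.
Proof.
move=> xj; apply/flattenP; exists (nth [::] L j) => //; apply: mem_nth.
by rewrite ltnNge; apply: contraL xj => /(nth_default [::]) ->.
Qed.

Lemma uniq_flatten_nth_disjoint (T : eqType) (L : seq (seq T)) i j x :
  uniq (flatten L) -> i != j -> x \in nth [::] L i -> x \in nth [::] L j -> False.
Proof.
elim: L i j => [|s L IH] i j; first by rewrite !nth_nil.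
rewrite /= cat_uniq => /and3P [_ s_disj uL].
case: i j => [|i] [|j] //= ne xi xj.
- by move/hasP: s_disj; apply; exists x => //; apply: mem_flatten_nth xj.
- by move/hasP: s_disj; apply; exists x => //; apply: mem_flatten_nth xi.
- exact: IH i j uL ne xi xj.
Qed.

Section Tournament.
Variables (V : finType) (arc : rel V).
Hypothesis tour : tournament arc.

Lemma tournament_irr x : arc x x = false.
Proof. by apply/negbTE; case: tour. Qed.

Lemma tournament_total x y : x != y -> arc x y || arc y x.
Proof. by case: tour => _ h /h []. Qed.

Lemma tournament_asym x y : arc x y -> ~~ arc y x.
Proof.
case: (eqVneq x y) => [-> | /(proj2 tour) [_ /negP not_both] xy].
  by rewrite tournament_irr.
by apply/negP => yx; apply: not_both; rewrite xy yx.
Qed.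

Lemma arc_neq x y : arc x y -> x != y.
Proof. by apply: contraTneq => ->; rewrite tournament_irr. Qed.

Lemma tournament_flip x y : x != y -> ~~ arc x y -> arc y x.
Proof. by move/tournament_total; case: (arc x y). Qed.

Lemma tournament_insert s1 s2 x z w :
  x \in s1 -> z \in s2 -> arc x w -> arc w z -> w \notin s1 ++ s2 ->
  exists q, q =i w :: s1 ++ s2 /\
    forall a b, is_dipath arc a b (s1 ++ s2) -> is_dipath arc a b q.
Proof.
case/splitPr=> l r zs2 xw wz wp.
have not_all_in : ~~ all (arc^~ w) (r ++ s2).
  by apply/allPn; exists z; rewrite ?mem_cat ?zs2 ?orbT ?tournament_asym.
have [t1 [c [d [t2 [e cw dw]]]]] := split_at_switch xw not_all_in.
have split_p : (l ++ x :: r) ++ s2 = (l ++ t1) ++ [:: c, d & t2].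
  by rewrite -!catA /= e.
rewrite split_p in wp *.
have wd : arc w d.
  apply: tournament_flip dw; apply: contraNneq wp => <-.
  by rewrite !(mem_cat, inE) eqxx !orbT.
exists ((l ++ t1) ++ [:: c, w, d & t2]); split.
  by move=> y; rewrite !(mem_cat, inE); case: (y == w); rewrite ?orbT.
move=> a b pD; apply: (dipath_splice (r := [:: w]) pD) => //=.
  by rewrite cw wd.
by rewrite orbF.
Qed.

Lemma tournament_insert_after_head a b p w y :
  is_dipath arc a b p -> arc a w -> y \in p -> y != a -> arc w y -> w \notin p ->
  exists q, q =i w :: p /\
    forall a' b', is_dipath arc a' b' p -> is_dipath arc a' b' q.
Proof.
move=> pD aw; have [t ->] := dipath_head pD.
rewrite inE => /predU1P [-> | yt]; first by rewrite eqxx.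
by move=> _ wy; apply: (tournament_insert (s1 := [:: a]) (mem_head a [::]) yt aw wy).
Qed.

Lemma tournament_insert_before_last a b p w y :
  is_dipath arc a b p -> arc w b -> y \in p -> y != b -> arc y w -> w \notin p ->
  exists q, q =i w :: p /\
    forall a' b', is_dipath arc a' b' p -> is_dipath arc a' b' q.
Proof.
move=> pD wb yp; case/splitPr: yp pD => l r pD yb yw.
have br : b \in r.
  have := dipath_last y pD; rewrite last_cat /= => lb.
  by move: (mem_last y r); rewrite lb inE => /predU1P [b_y|//]; rewrite b_y eqxx in yb.
have yl : y \in rcons l y by rewrite mem_rcons mem_head.
by rewrite -cat_rcons; apply: (tournament_insert yl br yw wb).
Qed.

End Tournament.

Section Pair.
Variables (V : finType) (arc : rel V).
Hypothesis tour : tournament arc.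
Variables u v : V.
Hypothesis uv : arc u v.

Definition mid_uv w := arc u w && arc w v.
Definition mid_vu w := arc v w && arc w u.
Definition below w := arc u w && arc v w.
Definition above w := arc w u && arc w v.

Lemma neq_uv : u != v. Proof. exact: (arc_neq tour uv). Qed.

Lemma vertex_classes w : w != u -> w != v ->
  [|| mid_uv w, mid_vu w, below w | above w].
Proof.
move=> /(tournament_total tour) wu /(tournament_total tour) wv.
rewrite /mid_uv /mid_vu /below /above.
by case: (arc w u) (arc u w) (arc w v) (arc v w) wu wv => [] [] [] [].
Qed.

Section Covering.
Variable n : nat.

(* The last two fields supply the paths that absorb uncovered vertices with
   u -> w -> v, resp. v -> w -> u. *)
Definition partial_container (P : 'I_n -> seq V) :=
  [/\ forall i, is_dipath arc u v (P i) || is_dipath arc v u (P i),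
      forall i j, i != j -> P i != P j,
      forall i j, i != j -> forall x, x \in P i -> x \in P j -> x = u \/ x = v,
      exists i, is_dipath arc u v (P i)
    & (exists w, mid_vu w) -> exists i, is_dipath arc v u (P i)].

Definition covered (P : 'I_n -> seq V) := [set x | [exists i, x \in P i]].

Definition inner (P : 'I_n -> seq V) := covered P :\: [set u; v].

Definition extendable (P : 'I_n -> seq V) :=
  exists2 P', partial_container P' & #|covered P| < #|covered P'|.

Lemma mem_covered P i x : x \in P i -> x \in covered P.
Proof. by move=> xP; rewrite inE; apply/existsP; exists i. Qed.

Lemma notin_covered P i x : x \notin covered P -> x \notin P i.
Proof. by apply: contra; apply: mem_covered. Qed.

Lemma mem_inner P x : (x \in inner P) = [&& x \in covered P, x != u & x != v].
Proof. by rewrite !inE negb_or andbC andbA. Qed.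

Lemma extendable_splice P i q r :
  partial_container P ->
  (forall a b, is_dipath arc a b (P i) -> is_dipath arc a b q) ->
  q =i r ++ P i -> r != [::] -> {in r, forall x, x \notin covered P} ->
  extendable P.
Proof.
case=> Pdi Pneq Pdisj [i0 Pi0] Pvu qD qE; case: r qE => [|w r] // qE _ rP.
have wP : w \notin covered P by rewrite rP ?mem_head.
have q_new j : q != P j.
  by apply: contraNneq (notin_covered j wP) => <-; rewrite qE mem_head.
have q_disj j : j != i -> forall x, x \in q -> x \in P j -> x = u \/ x = v.
  move=> ji x; rewrite qE mem_cat => /orP [/rP xP | xi] xj.
    by rewrite (mem_covered xj) in xP.
  by apply: (Pdisj i j) => //; rewrite eq_sym.
pose P' j := if j == i then q else P j.
have P'D a b j : is_dipath arc a b (P j) -> is_dipath arc a b (P' j).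
  by rewrite /P'; case: eqP => [-> | _]; [apply: qD |].
exists P'; first split.
- by move=> j; case/orP: (Pdi j) => /P'D ->; rewrite ?orbT.
- move=> j1 j2 ne; rewrite /P'.
  case: (eqVneq j1 i) => [j1i | j1i]; case: (eqVneq j2 i) => [j2i | j2i].
  + by rewrite j1i j2i eqxx in ne.
  + exact: q_new.
  + by rewrite eq_sym q_new.
  + exact: Pneq.
- move=> j1 j2 ne x; rewrite /P'.
  case: (eqVneq j1 i) => [j1i | j1i]; case: (eqVneq j2 i) => [j2i | j2i].
  + by rewrite j1i j2i eqxx in ne.
  + exact: q_disj.
  + by move=> xj1 xq; apply: q_disj xq xj1.
  + exact: Pdisj.
- by exists i0; apply: P'D.
- by case/Pvu => i1 Pi1; exists i1; apply: P'D.
apply: proper_card; apply/properP; split.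
  apply/subsetP => x; rewrite !inE => /existsP [j xj]; apply/existsP; exists j.
  by rewrite /P'; case: eqP => [ji | //]; rewrite qE mem_cat -ji xj orbT.
by exists w => //; apply: (mem_covered (i := i)); rewrite /P' eqxx qE mem_head.
Qed.

Lemma extendable_after_head P i a b w y :
  partial_container P -> is_dipath arc a b (P i) -> arc a w -> y \in P i -> y != a ->
  arc w y -> w \notin covered P -> extendable P.
Proof.
move=> PC pD aw yP ya wy wP.
have [q [qE qD]] := tournament_insert_after_head tour pD aw yP ya wy (notin_covered i wP).
by apply: (extendable_splice (r := [:: w]) PC qD) => // x; rewrite inE => /eqP ->.
Qed.

Lemma extendable_before_last P i a b w y :
  partial_container P -> is_dipath arc a b (P i) -> arc w b -> y \in P i -> y != b ->
  arc y w -> w \notin covered P -> extendable P.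
Proof.
move=> PC pD wb yP yb yw wP.
have [q [qE qD]] := tournament_insert_before_last tour pD wb yP yb yw (notin_covered i wP).
by apply: (extendable_splice (r := [:: w]) PC qD) => // x; rewrite inE => /eqP ->.
Qed.

Lemma extendable_mid P w :
  partial_container P -> w \notin covered P -> mid_uv w || mid_vu w -> extendable P.
Proof.
move=> PC wP; have [_ _ _ [i0 Pi0] Pvu] := PC; case/orP => [/andP [uw wv] | wM].
  apply: (extendable_after_head PC Pi0 uw (mem_dipath_last Pi0) _ wv wP).
  by rewrite eq_sym neq_uv.
have [i1 Pi1] := Pvu (ex_intro _ w wM); case/andP: wM => vw wu.
exact: (extendable_after_head PC Pi1 vw (mem_dipath_last Pi1) neq_uv wu wP).
Qed.

Lemma extendable_below P w y :
  partial_container P -> w \notin covered P -> below w -> y \in inner P -> arc w y ->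
  extendable P.
Proof.
move=> PC wP /andP [uw vw]; rewrite mem_inner => /and3P [/[!inE] /existsP [i yP] yu yv] wy.
have [Pdi _ _ _ _] := PC.
by case/orP: (Pdi i) => pD;
  [apply: (extendable_after_head PC pD uw yP yu) | apply: (extendable_after_head PC pD vw yP yv)].
Qed.

Lemma extendable_above P w y :
  partial_container P -> w \notin covered P -> above w -> y \in inner P -> arc y w ->
  extendable P.
Proof.
move=> PC wP /andP [wu wv]; rewrite mem_inner => /and3P [/[!inE] /existsP [i yP] yu yv] yw.
have [Pdi _ _ _ _] := PC.
by case/orP: (Pdi i) => pD;
  [apply: (extendable_before_last PC pD wv yP yv) | apply: (extendable_before_last PC pD wu yP yu)].
Qed.

(* The new path is u -> c -> d -> h -> ..., where h is the successor of u on a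
   (u,v)-path; d -> h holds because h is v or an inner vertex. *)
Lemma extendable_below_above P c d :
  partial_container P -> c \notin covered P -> d \notin covered P -> below c -> above d ->
  arc c d -> {in inner P, forall y, ~~ arc y d} -> extendable P.
Proof.
move=> PC cP dP /andP [uc _] /andP [_ dv] cd no_in; have [_ _ _ [i Pi] _] := PC.
have [t Pit] := dipath_head Pi.
case: t Pit => [|h t] Pit.
  by have := neq_uv; rewrite -(dipath_last u Pi) Pit /= eqxx.
have dh : arc d h.
  case: (eqVneq h v) => [-> // | hv].
  have hP : h \in P i by rewrite Pit !inE eqxx orbT.
  have hu : h != u.
    by move: (dipath_uniq Pi); rewrite Pit /= inE negb_or eq_sym => /andP [/andP []].
  apply: (tournament_flip tour); first by apply: contraNneq dP => <-; apply: mem_covered hP.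
  by apply: no_in; rewrite mem_inner (mem_covered hP) hu.
apply: (extendable_splice (i := i) (q := [:: u, c, d, h & t]) (r := [:: c; d]) PC).
- rewrite Pit => a b pD; apply: (dipath_splice (t1 := [::]) (r := [:: c; d]) pD) => /=.
  + by rewrite uc cd dh.
  + by rewrite inE (arc_neq tour cd).
  + by rewrite -Pit orbF (negbTE (notin_covered i cP)) (negbTE (notin_covered i dP)).
- by move=> x; rewrite Pit !inE; case: (x == u); case: (x == c); case: (x == d).
- by [].
- by move=> x; rewrite !in_cons in_nil orbF => /orP [] /eqP ->.
Qed.

Section Stuck.
Hypothesis strong0 : strong_avoiding arc set0.
Variable P : 'I_n -> seq V.
Hypotheses (PC : partial_container P) (stuck : ~ extendable P).

Lemma stuck_not_mid w : w \notin covered P -> ~~ (mid_uv w || mid_vu w).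
Proof. by move=> wP; apply/negP => wM; apply: stuck; apply: extendable_mid PC wP wM. Qed.

Lemma stuck_above_no_inner_in d :
  d \notin covered P -> above d -> {in inner P, forall y, ~~ arc y d}.
Proof.
move=> dP dA y yI; apply/negP => yd.
by apply: stuck; apply: extendable_above PC dP dA yI yd.
Qed.

Lemma uncovered_below_out_closed a b :
  arc a b -> a \notin covered P -> below a -> (b \notin covered P) && below b.
Proof.
move=> ab aP aB; have /andP [ua va] := aB.
have bu : b != u by apply: contraTneq ab => ->; apply: (tournament_asym tour ua).
have bv : b != v by apply: contraTneq ab => ->; apply: (tournament_asym tour va).
have bP : b \notin covered P.
  apply/negP => bP; apply: stuck; apply: (extendable_below PC aP aB _ ab).
  by rewrite mem_inner bP bu bv.
rewrite bP; case/or4P: (vertex_classes bu bv) => // [bM | bM | bA].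
- by move: (stuck_not_mid bP); rewrite bM.
- by move: (stuck_not_mid bP); rewrite bM orbT.
case: stuck; exact: extendable_below_above PC aP bP aB bA ab (stuck_above_no_inner_in bP bA).
Qed.

Lemma uncovered_above_in_closed a b :
  arc a b -> b \notin covered P -> above b -> (a \notin covered P) && above a.
Proof.
move=> ab bP bA; have /andP [bu bv] := bA.
have au : a != u by apply: contraTneq ab => ->; apply: (tournament_asym tour bu).
have av : a != v by apply: contraTneq ab => ->; apply: (tournament_asym tour bv).
have aP : a \notin covered P.
  apply/negP => aP; apply: stuck; apply: (extendable_above PC bP bA _ ab).
  by rewrite mem_inner aP au av.
rewrite aP; case/or4P: (vertex_classes au av) => // [aM | aM | aB].
- by move: (stuck_not_mid aP); rewrite aM.
- by move: (stuck_not_mid aP); rewrite aM orbT.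
case: stuck; exact: extendable_below_above PC aP bP aB bA ab (stuck_above_no_inner_in bP bA).
Qed.

Lemma covered_of_stuck w : w \in covered P.
Proof.
have [Pdi _ _ [i Pi] _] := PC.
have uP : u \in covered P by apply: (mem_covered (i := i)); apply: mem_dipath_head Pi.
have vP : v \in covered P by apply: (mem_covered (i := i)); apply: mem_dipath_last Pi.
have notin0 x : x \notin (set0 : {set V}) by rewrite in_set0.
apply: contraT => wP.
case: (boolP [exists c, (c \notin covered P) && below c]) => [/existsP [c cZ] | no_below].
  have := strong_avoiding_out_closed strong0
    (Z := [pred x | (x \notin covered P) && below x]) _ (notin0 c) (notin0 u) cZ.
  rewrite /= uP; apply=> a b ab _ _ /andP [aP aB].
  exact: uncovered_below_out_closed ab aP aB.
have wu : w != u by apply: contraNneq wP => ->.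
have wv : w != v by apply: contraNneq wP => ->.
have wA : above w.
  case/or4P: (vertex_classes wu wv) => // [wM | wM | wB].
  - by move: (stuck_not_mid wP); rewrite wM.
  - by move: (stuck_not_mid wP); rewrite wM orbT.
  - by move/existsPn: no_below => /(_ w); rewrite wP wB.
have := strong_avoiding_in_closed strong0 (Z := [pred x | (x \notin covered P) && above x])
  _ (notin0 u) (notin0 w).
rewrite /= uP wP wA; apply=> // a b ab _ _ /andP [bP bA].
exact: uncovered_above_in_closed ab bP bA.
Qed.

End Stuck.

Lemma partial_container_complete P :
  strong_avoiding arc set0 -> partial_container P ->
  exists2 P', partial_container P' & forall x, exists i, x \in P' i.
Proof.
move=> strong0; have [m] := ubnP (#|V| - #|covered P|).
elim: m P => // m IH P bound PC.
case: (boolP [forall x, x \in covered P]) => [/forallP all_covered | /forallPn [w wP]].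
  by exists P => // x; move: (all_covered x); rewrite inE => /existsP.
have [P' PC' grows] : extendable P.
  by apply: NNPP => stuck; rewrite (covered_of_stuck strong0 PC stuck) in wP.
apply: (IH P') => //; have := max_card (covered P'); lia.
Qed.

End Covering.

Lemma short_route_avoiding S :
  strong_avoiding arc S -> u \notin S -> v \notin S ->
  (exists2 w, w \notin S & mid_uv w || mid_vu w) \/
  exists c d, [/\ c \notin S, d \notin S, below c, above d & arc c d].
Proof.
move=> strongS uS vS.
case: (boolP [exists w, (w \notin S) && (mid_uv w || mid_vu w)]) =>
  [/existsP [w /andP [wS wM]] | /existsPn no_mid]; first by left; exists w.
case: (boolP [exists c, exists d, [&& c \notin S, d \notin S, below c, above d & arc c d]])
  => [/existsP [c /existsP [d /and5P [cS dS cB dA cd]]] | /existsPn no_cd].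
  by right; exists c, d.
suff: (u == v) || below u by rewrite (negbTE neq_uv) /below (tournament_irr tour).
apply: (strong_avoiding_out_closed strongS (Z := [pred x | (x == v) || below x]) _ vS uS);
  last by rewrite /= eqxx.
move=> a b ab aS bS /orP Za /=; case: (eqVneq b v) => //= bv.
have bu : b != u.
  apply: contraTneq ab => ->.
  by case: Za => [/eqP -> | /andP [ua _]]; apply: (tournament_asym tour).
case/or4P: (vertex_classes bu bv) => // [bM | bM | bA].
- by move: (no_mid b); rewrite bS bM.
- by move: (no_mid b); rewrite bS bM orbT.
case: Za => [/eqP av | aB].
  by move: ab; rewrite av => /(tournament_asym tour); case/andP: bA => _ ->.
by move/existsPn: (no_cd a) => /(_ b); rewrite aS bS aB bA ab.
Qed.

Definition uv_route s := is_dipath arc u v (u :: rcons s v).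
Definition vu_route s := is_dipath arc v u (v :: rcons s u).
Definition route s := if vu_route s then v :: rcons s u else u :: rcons s v.

Lemma route_dipath s :
  uv_route s || vu_route s -> is_dipath arc u v (route s) || is_dipath arc v u (route s).
Proof.
rewrite /route; case: ifP => [vu_s _ | not_vu]; first by apply/orP; right.
by rewrite orbF => uv_s; apply/orP; left.
Qed.

Lemma mem_route s x : (x \in route s) = [|| x == u, x == v | x \in s].
Proof.
rewrite /route; case: ifP => _; rewrite !inE mem_rcons inE //.
by case: (x == u); case: (x == v).
Qed.

Lemma route_interior s :
  uv_route s || vu_route s -> [&& uniq s, u \notin s & v \notin s].
Proof.
by case/orP => /and4P [_ _ + _]; rewrite /= rcons_uniq mem_rcons inE negb_or;
  case/and3P => [/andP [_ ->] -> ->]; rewrite ?andbT.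
Qed.

Lemma mid_uv_route w : mid_uv w -> uv_route [:: w].
Proof.
case/andP => uw wv; rewrite /uv_route /= uw wv !eqxx !inE !negb_or neq_uv.
by rewrite (arc_neq tour uw) (arc_neq tour wv).
Qed.

Lemma mid_vu_route w : mid_vu w -> vu_route [:: w].
Proof.
case/andP => vw wu; rewrite /vu_route /= vw wu !eqxx !inE !negb_or (eq_sym v u) neq_uv.
by rewrite (arc_neq tour vw) (arc_neq tour wu).
Qed.

Lemma mid_route w : mid_uv w || mid_vu w -> uv_route [:: w] || vu_route [:: w].
Proof. by case/orP => [/mid_uv_route -> | /mid_vu_route ->]; rewrite ?orbT. Qed.

Lemma below_above_route c d : below c -> above d -> arc c d -> uv_route [:: c; d].
Proof.
move=> /andP [uc vc] /andP [du dv] cd.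
rewrite /uv_route /= uc cd dv eqxx !inE !negb_or neq_uv (arc_neq tour uc) (arc_neq tour cd).
by rewrite eqxx (arc_neq tour dv) (eq_sym u d) (arc_neq tour du) (eq_sym c v) (arc_neq tour vc).
Qed.

Section ShortRoutes.
Variable k : nat.
Hypothesis k_pos : 0 < k.
Hypothesis strongk : forall S : {set V}, #|S| < 2 * k -> strong_avoiding arc S.
Hypothesis two_path : exists z, mid_uv z || mid_vu z.

(* Interiors of the short paths chosen so far.  The bound on size (flatten I)
   keeps fewer than 2k vertices in use while at most k paths are chosen. *)
Definition short_routes (I : seq (seq V)) :=
  [/\ all (fun s => uv_route s || vu_route s) I, all (fun s => s != [::]) I,
      [&& uniq (flatten I), u \notin flatten I & v \notin flatten I],
      size (flatten I) < 2 * size I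
    & (exists w, mid_vu w) -> has vu_route I].

Lemma short_routes_cons I s :
  short_routes I -> uv_route s || vu_route s -> s != [::] ->
  {in s, forall x, x \notin flatten I} -> size s <= 2 -> short_routes (s :: I).
Proof.
case=> I_routes I_nonnil /and3P [uI uI' vI'] sizeI I_vu s_route s_nonnil s_disj size_s.
have /and3P [us us' vs'] := route_interior s_route.
split => /=; rewrite ?s_route ?s_nonnil //.
- rewrite cat_uniq us uI !mem_cat !negb_or us' uI' vs' vI' !andbT.
  by apply/hasPn => x xI; apply: contraL xI; apply: s_disj.
- by rewrite size_cat mulnS -addnS leq_add.
- by move/I_vu ->; rewrite orbT.
Qed.

Lemma short_routes_grow I : short_routes I -> size I <= k -> exists s, short_routes (s :: I).
Proof.
move=> routesI sizeI; have [_ _ /and3P [_ uI vI] size_flat _] := routesI.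
pose S := [set x in flatten I].
have strongS : strong_avoiding arc S.
  have cardS : #|S| <= size (flatten I) by rewrite cardsE card_size.
  exact: strongk (leq_ltn_trans cardS (leq_trans size_flat (leq_mul (leqnn 2) sizeI))).
have uS : u \notin S by rewrite inE.
have vS : v \notin S by rewrite inE.
have [[w wS wM] | [c [d [cS dS cB dA cd]]]] := short_route_avoiding strongS uS vS.
  exists [:: w]; apply: short_routes_cons; rewrite ?mid_route //.
  by move=> x; rewrite inE => /eqP ->; rewrite inE in wS.
exists [:: c; d]; apply: short_routes_cons => //.
- by rewrite below_above_route.
- by move=> x; rewrite !in_cons in_nil orbF => /orP [] /eqP ->; [move: cS | move: dS];
  rewrite inE.
Qed.

Lemma short_routes_single w :
  mid_uv w || mid_vu w -> ((exists x, mid_vu x) -> vu_route [:: w]) ->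
  short_routes [:: [:: w]].
Proof.
move=> wM w_vu; have w_route := mid_route wM.
have /and3P [_ uw vw] := route_interior w_route.
by split; rewrite /= ?w_route ?cats0 ?uw ?vw // => /w_vu ->.
Qed.

(* Starting through a vertex of mid_vu, when there is one, guarantees a
   (v,u)-path into which the other vertices of mid_vu can later be inserted. *)
Lemma short_routes_start : exists s, short_routes [:: s].
Proof.
case: (boolP [exists w, mid_vu w]) => [/existsP [b bM] | /existsPn no_vu].
  exists [:: b]; apply: short_routes_single; first by rewrite bM orbT.
  by move=> _; apply: mid_vu_route.
have [z zM] := two_path; exists [:: z]; apply: short_routes_single => // [[x xM]].
by move: (no_vu x); rewrite xM.
Qed.

Lemma short_routes_exist : exists I, size I = k.+1 /\ short_routes I.
Proof.
suff: forall j, j <= k -> exists I, size I = j.+1 /\ short_routes I by apply.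
elim=> [_ | j IH jk]; first by have [s routes_s] := short_routes_start; exists [:: s].
have [I [sizeI routesI]] := IH (ltnW jk).
have [s routes_sI] := short_routes_grow routesI (leq_trans (eq_leq sizeI) jk).
by exists (s :: I); rewrite /= sizeI.
Qed.

Lemma route_nil : route [::] = [:: u; v].
Proof. by rewrite /route /vu_route /= andbC; case: (arc v u) (tournament_asym tour uv). Qed.

(* Index 0 carries the one-arc path [:: u; v]. *)
Definition routes_container I (i : 'I_(k + 2)) := route (nth [::] ([::] :: I) i).

Lemma routes_container_dipath I i : size I = k.+1 -> short_routes I ->
  is_dipath arc u v (routes_container I i) || is_dipath arc v u (routes_container I i).
Proof.
move=> sizeI [I_routes _ _ _ _]; apply: route_dipath.
case: i => [[|j] /= jI]; first by rewrite /uv_route /= uv !eqxx inE neq_uv.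
by apply: (allP I_routes); apply: mem_nth; rewrite sizeI -ltnS -[k.+2]addn2.
Qed.

Lemma routes_container_disjoint I i j x : short_routes I -> i != j ->
  x \in routes_container I i -> x \in routes_container I j -> x = u \/ x = v.
Proof.
case=> _ _ /and3P [uI _ _] _ _ ne; rewrite !mem_route.
case/or3P => [/eqP -> | /eqP -> | xi]; [by left | by right |].
case/or3P => [/eqP -> | /eqP -> | xj]; [by left | by right | exfalso].
exact: (uniq_flatten_nth_disjoint (L := [::] :: I) uI ne xi xj).
Qed.

Lemma routes_container_neq I i j : size I = k.+1 -> short_routes I -> i != j ->
  routes_container I i != routes_container I j.
Proof.
move=> sizeI routesI; wlog i_pos : i j / 0 < i.
  move=> sym ne; case: (posnP i) => [i0 | i_pos]; last exact: sym.
  rewrite eq_sym sym 1?eq_sym // lt0n.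
  by apply: contraNneq ne => j0; apply/eqP/val_inj; rewrite /= i0 j0.
have [_ I_nonnil /and3P [_ uI vI] _ _] := routesI.
case: i i_pos => [[|i] //= iI] _ ne.
have : nth [::] I i != [::].
  by apply: (allP I_nonnil); apply: mem_nth; rewrite sizeI -ltnS -[k.+2]addn2.
case def_s : (nth [::] I i) => [|x s] // _; apply/eqP => same.
have xi : x \in routes_container I (Ordinal iI).
  by rewrite mem_route /= def_s mem_head !orbT.
have xI : x \in flatten I by apply: (mem_flatten_nth (j := i)); rewrite def_s mem_head.
have := routes_container_disjoint routesI ne xi; rewrite -same => /(_ xi) [xu | xv].
  by rewrite -xu xI in uI.
by rewrite -xv xI in vI.
Qed.

Lemma partial_container_routes I : size I = k.+1 -> short_routes I ->
  partial_container (routes_container I).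
Proof.
move=> sizeI routesI; have [_ _ _ _ I_vu] := routesI; split.
- by move=> i; apply: routes_container_dipath.
- by move=> i j; apply: routes_container_neq.
- by move=> i j ne x; apply: routes_container_disjoint.
- have zero : 0 < k + 2 by rewrite addn2.
  by exists (Ordinal zero); rewrite /routes_container /= route_nil /= uv !eqxx inE neq_uv.
move/I_vu/hasP => [s sI s_vu].
have iI : (index s I).+1 < k + 2 by rewrite addn2 ltnS -sizeI index_mem.
by exists (Ordinal iI); rewrite /routes_container /= nth_index // /route s_vu.
Qed.

Lemma weak_container_arc : weak_container arc (k + 2) u v.
Proof.
have [I [sizeI routesI]] := short_routes_exist.
have strong0 : strong_avoiding arc set0 by apply: strongk; rewrite cards0 muln_gt0.
have [P [Pdi Pneq Pdisj _ _] Pcover] :=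
  partial_container_complete strong0 (partial_container_routes sizeI routesI).
by exists P.
Qed.

End ShortRoutes.
End Pair.

Lemma weak_container_sym (V : finType) (arc : rel V) n a b :
  weak_container arc n a b -> weak_container arc n b a.
Proof.
case=> P [Pdi Pneq Pdisj Pcover]; exists P; split => //.
- by move=> i; rewrite orbC.
- by move=> i j ne x xi xj; case: (Pdisj i j ne x xi xj); [right | left].
Qed.

Theorem proposition2p8 (V : finType) (arc : rel V) (k : nat) :
  1 <= k ->
  tournament arc ->
  m_strong arc (2 * k) ->
  (forall x y : V, x != y ->
     exists z : V, (arc x z && arc z y) || (arc y z && arc z x)) ->
  weakly_connected_star arc (k + 2).
Proof.
move=> k_pos tour [_ strong] two_path u v uv_neq.
case/orP: (tournament_total tour uv_neq) => [uv | vu].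
  exact: (weak_container_arc tour uv k_pos strong (two_path u v uv_neq)).
apply: weak_container_sym.
by apply: (weak_container_arc tour vu k_pos strong); apply: two_path; rewrite eq_sym.
Qed.
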